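(* Let $\mathcal{C}$ be an $(n,k,d)$ linear MDS code over a finite field $\mathbb{F}_q$ with $d \ge 3$, and set $m = \min\{k, n-k-1\}$. Then $$\rho(\mathcal{C}) \le \binom{n}{d-2} - U(n,d-2,m).$$
   Context: An $(n,k,d)$ linear MDS code is a linear code over $\mathbb{F}_q$ of length $n$, dimension $k$ and minimum Hamming distance $d = n-k+1$. A parity-check matrix for $\mathcal{C}$ is any matrix (possibly with linearly dependent rows) whose rows span $\mathcal{C}^\perp$. For a parity-check matrix $H$, the stopping distance $s(H)$ is the largest integer such that for every set of $s(H)-1$ or fewer columns of $H$, the projection of $H$ onto those columns contains at least one row with exactly one nonzero entry. The stopping redundancy $\rho(\mathcal{C})$ is the smallest number of rows of a parity-check matrix $H$ for $\mathcal{C}$ with $s(H) = d$. An $(n,4,w)$ constant-weight code is a set of binary vectors of length $n$ and Hamming weight $w$ any two of which are at Hamming distance at least $4$. $U(n,w,m)$ denotes the largest possible cardinality of a union of $m$ constant-weight codes, each with parameters $(n,4,w)$. *)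

From HB Require Import structures.
From mathcomp Require Import all_boot all_order all_algebra.
Set Implicit Arguments. Unset Strict Implicit. Unset Printing Implicit Defensive.
Import GRing.Theory.
Local Open Scope ring_scope.

(* A linear code of length n and dimension k over F is given by a full-rank
   generator matrix G : 'M[F]_(k, n); its codewords are the row vectors in the
   row space of G. *)
Definition codeword (F : fieldType) (k n : nat) (G : 'M[F]_(k, n)) (c : 'rV[F]_n) : bool :=
  (c <= G)%MS.

Definition wt (F : fieldType) (n : nat) (c : 'rV[F]_n) : nat :=
  #|[set j : 'I_n | c ord0 j != 0]|.

Definition min_distance (F : fieldType) (k n : nat) (G : 'M[F]_(k, n)) (d : nat) : Prop :=
  (exists c, codeword G c /\ c != 0 /\ wt c = d) /\
  (forall c, codeword G c -> c != 0 -> (d <= wt c)%N).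

Definition dual_code (F : fieldType) (k n : nat) (G : 'M[F]_(k, n)) : 'M[F]_n :=
  kermx G^T.

(* H is a parity-check matrix (rows possibly dependent) : its rows span C^perp *)
Definition parity_check (F : fieldType) (k n r : nat) (G : 'M[F]_(k, n)) (H : 'M[F]_(r, n)) : Prop :=
  (H == dual_code G)%MS.

Definition covered (F : fieldType) (r n : nat) (H : 'M[F]_(r, n)) (S : {set 'I_n}) : bool :=
  [exists i : 'I_r, #|[set j in S | H i j != 0]| == 1%N].

Definition stop_ok (F : fieldType) (r n : nat) (H : 'M[F]_(r, n)) (s : nat) : Prop :=
  forall S : {set 'I_n}, S != set0 -> (#|S| <= s.-1)%N -> covered H S.

Definition stopping_distance_is (F : fieldType) (r n : nat) (H : 'M[F]_(r, n)) (s : nat) : Prop :=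
  stop_ok H s /\ ~ stop_ok H s.+1.

Definition stop_achievable (F : fieldType) (k n : nat) (G : 'M[F]_(k, n)) (d r : nat) : Prop :=
  exists H : 'M[F]_(r, n), parity_check G H /\ stopping_distance_is H d.

Definition stopping_redundancy_is (F : fieldType) (k n : nat) (G : 'M[F]_(k, n)) (d rho : nat) : Prop :=
  stop_achievable G d rho /\ (forall r, stop_achievable G d r -> (rho <= r)%N).

(* binary vectors of length n are identified with their supports {set 'I_n};
   the Hamming distance is the size of the symmetric difference *)
Definition hdist (n : nat) (A B : {set 'I_n}) : nat := #|(A :\: B) :|: (B :\: A)|.

Definition cw_code (n w : nat) (C : {set {set 'I_n}}) : bool :=
  [forall A in C, #|A| == w] &&
  [forall A in C, forall B in C, (A != B) ==> (4 <= hdist A B)%N].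

Definition U (n w m : nat) : nat :=
  \max_(f : {ffun 'I_m -> {set {set 'I_n}}} | [forall i, cw_code w (f i)])
     #|\bigcup_(i < m) f i|.

From mathcomp Require Import all_boot all_order all_algebra.
From mathcomp Require Import zify.
From Stdlib Require Import Classical.
Set Implicit Arguments. Unset Strict Implicit. Unset Printing Implicit Defensive.
Import GRing.Theory.

(* Put w = d - 2 = n - k - 1.  The dual of an MDS code is MDS, so every w-set T of
   coordinates is exactly the zero set of some dual codeword, and such a row covers
   every set S of columns with |S \ T| = 1.  Take one row for each w-set outside the
   union R of m = min(k, w) constant-weight codes attaining U(n, w, m).  A nonempty S
   with |S| <= d - 1 has more than m candidates T with |S \ T| = 1 (delete a point of
   S, or add a point to a fixed (w-1)-set around S), pairwise at distance 2; a code of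
   minimum distance 4 holds at most one of them, so some candidate avoids R.  Hence
   s(H) >= d, which by a Singleton-type bound forces the rows to span the dual code,
   while a minimum-weight codeword gives s(H) <= d. *)

Lemma classic_ex_minn (P : nat -> Prop) :
  (exists n, P n) -> exists m, P m /\ forall n, P n -> m <= n.
Proof.
case=> n; elim/ltn_ind: n => n IHn Pn.
have [[m [Pm ltmn]]|no_less] := classic (exists m, P m /\ m < n).
  exact: IHn Pm.
exists n; split => // m Pm; rewrite leqNgt; apply/negP => ltmn.
by apply: no_less; exists m.
Qed.

Lemma card_bigcup_le (I T : finType) (P : pred I) (F : I -> {set T}) :
  #|\bigcup_(i | P i) F i| <= \sum_(i | P i) #|F i|.
Proof.
elim/big_rec2: _ => [|i s A _ IH]; first by rewrite cards0.
exact: leq_trans (leq_card_setU _ _) (leq_add (leqnn _) IH).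
Qed.

Lemma ex_subset_card (T : finType) (A B : {set T}) m :
  A \subset B -> #|A| <= m <= #|B| ->
  exists C : {set T}, [/\ A \subset C, C \subset B & #|C| = m].
Proof.
move=> sAB /andP[]; elim: m => [|m IHm] leAm lemB.
  by exists A; split => //; apply/eqP; rewrite -leqn0.
have [ltAm | eqAm] := ltnP #|A| m.+1; last first.
  by exists A; split => //; apply/eqP; rewrite eqn_leq eqAm leAm.
have [C [sAC sCB cardC]] := IHm ltAm (ltnW lemB).
have /subsetPn[x xB xNC] : ~~ (B \subset C).
  by apply/negP => /subset_leq_card; rewrite cardC leqNgt lemB.
exists (x |: C); split; first exact: subset_trans sAC (subsetUr _ _).
  by rewrite subUset sub1set xB.
by rewrite cardsU1 xNC cardC.
Qed.

Lemma hdist_le2 n (A B : {set 'I_n}) :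
  #|A| = #|B| -> #|A| <= (#|A :&: B|).+1 -> hdist A B <= 2.
Proof.
move=> eqAB leAI; rewrite /hdist cardsU !cardsD (setIC B A).
have := subset_leq_card (subsetIl A B); lia.
Qed.

Lemma cw_code_card n w (C : {set {set 'I_n}}) A : cw_code w C -> A \in C -> #|A| = w.
Proof. by case/andP => /forall_inP/(_ A) cardC _ /cardC/eqP. Qed.

Lemma cw_code_dist n w (C : {set {set 'I_n}}) A B :
  cw_code w C -> A \in C -> B \in C -> A != B -> 4 <= hdist A B.
Proof.
by case/andP => _ /forall_inP/(_ A) distC /distC/forall_inP/(_ B) dAB /dAB/implyP.
Qed.

Lemma U_attained n w m :
  exists2 f : 'I_m -> {set {set 'I_n}},
    forall i, cw_code w (f i) & U n w m = #|\bigcup_(i < m) f i|.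
Proof.
have [f /forallP code_f ->] : {f : {ffun 'I_m -> {set {set 'I_n}}} |
    [forall i, cw_code w (f i)] & U n w m = #|\bigcup_(i < m) f i|}.
  apply: eq_bigmax_cond; apply/card_gt0P; exists [ffun => set0].
  by rewrite unfold_in; apply/forallP => i; rewrite ffunE /cw_code;
    apply/andP; split; apply/forall_inP => A; rewrite in_set0.
by exists f.
Qed.

Section UnionOfCodes.

Variables (n w m : nat) (f : 'I_m -> {set {set 'I_n}}).
Hypothesis code_f : forall i, cw_code w (f i).

Let R := \bigcup_(i < m) f i.

Lemma card_draws_notin_codes :
  #|[set T : {set 'I_n} | #|T| == w] :\: R| = 'C(n, w) - #|R|.
Proof.
rewrite cardsDS ?card_draws ?card_ord //.
by apply/subsetP => T /bigcupP[i _ Ti]; rewrite inE (cw_code_card (code_f i) Ti).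
Qed.

(* A code of minimum distance 4 contains at most one of the g x. *)
Lemma exists_notin_codes (T : finType) (X : {set T}) (g : T -> {set 'I_n}) :
  {in X &, forall x y, x != y -> g x != g y /\ hdist (g x) (g y) <= 2} ->
  m < #|X| -> exists2 x, x \in X & g x \notin R.
Proof.
move=> close_g ltmX; apply/exists_inP; apply: contraLR ltmX.
rewrite negb_exists_in -leqNgt => /forall_inP gX_R.
pose P i := [set x in X | g x \in f i].
have sXP : X \subset \bigcup_(i < m) P i.
  apply/subsetP => x xX; have /bigcupP[i _ gxi] := negbNE (gX_R x xX).
  by apply/bigcupP; exists i; rewrite // inE xX.
apply: leq_trans (subset_leq_card sXP) _.
apply: leq_trans (card_bigcup_le _ _) _.
rewrite -[leqRHS]card_ord -sum1_card leq_sum // => i _.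
apply/card_le1_eqP => x y; rewrite !inE => /andP[xX gxi] /andP[yX gyi].
apply/eqP; apply: contraT => neq_xy; have [neq_g dist_g] := close_g y x yX xX neq_xy.
by have := cw_code_dist (code_f i) gyi gxi neq_g; rewrite leqNgt ltnS (leq_trans dist_g).
Qed.

Lemma exists_deletion_notin_codes (S : {set 'I_n}) :
  m < #|S| -> exists2 x, x \in S & S :\ x \notin R.
Proof.
apply: exists_notin_codes => x y xS yS neq_xy; split.
  by apply/negP => /eqP/setP/(_ y); rewrite !inE eqxx yS eq_sym neq_xy.
have ySx : y \in S :\ x by rewrite !inE eq_sym neq_xy.
apply: hdist_le2; first by have := cardsD1 x S; have := cardsD1 y S; rewrite xS yS; lia.
rewrite [#|S :\ x|](cardsD1 y) ySx ltnS subset_leq_card //.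
by apply/subsetP => z; rewrite !inE => /and3P[-> -> ->].
Qed.

Lemma exists_addition_notin_codes (A X : {set 'I_n}) :
  [disjoint X & A] -> m < #|X| -> exists2 x, x \in X & x |: A \notin R.
Proof.
move=> disjXA; apply: exists_notin_codes => x y xX yX neq_xy.
have xNA : x \notin A by rewrite (disjointFr disjXA).
have yNA : y \notin A by rewrite (disjointFr disjXA).
split.
  by apply/negP => /eqP/setP/(_ x); rewrite !inE eqxx (negbTE neq_xy) (negbTE xNA).
apply: hdist_le2; first by rewrite !cardsU1 xNA yNA.
rewrite cardsU1 xNA ltnS subset_leq_card //.
by apply/subsetP => z zA; rewrite !inE zA !orbT.
Qed.

Lemma exists_cover_notin_codes (S : {set 'I_n}) :
  m <= w -> m + w < n -> S != set0 -> #|S| <= w.+1 ->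
  exists T : {set 'I_n}, [/\ #|T| = w, T \notin R & #|S :\: T| = 1].
Proof.
move=> lemw ltmwn /set0Pn[j jS]; rewrite leq_eqVlt => /orP[/eqP cardS | ltSw].
  have [|x xS SxR] := @exists_deletion_notin_codes S; first by rewrite cardS ltnS.
  have cardSx : #|S :\ x| = w by move: (cardsD1 x S); rewrite xS cardS => -[].
  exists (S :\ x); split => //.
  by rewrite cardsDS ?subsetDl // cardS cardSx subSnn.
have cardSj : #|S :\ j| = #|S|.-1 by rewrite (cardsD1 j S) jS.
have w_gt0 : 0 < w by rewrite -ltnS (leq_trans _ ltSw) // ltnS; apply/card_gt0P; exists j.
have [A [sSA sAj cardA]] : exists A : {set 'I_n},
    [/\ S :\ j \subset A, A \subset [set~ j] & #|A| = w.-1].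
  apply: ex_subset_card; first by apply/subsetP => y; rewrite !inE => /andP[].
  by rewrite cardsC1 card_ord cardSj; lia.
have jNA : j \notin A by apply/negP => /(subsetP sAj); rewrite !inE eqxx.
have [||x xX xAR] := @exists_addition_notin_codes A (~: (j |: A)).
- by rewrite disjoint_sym disjoints_subset setCK subsetUr.
- by have := cardsC (j |: A); rewrite cardsU1 jNA card_ord cardA; lia.
move: xX; rewrite !inE negb_or => /andP[neq_xj xNA].
exists (x |: A); split => //; first by rewrite cardsU1 xNA cardA; lia.
suff -> : S :\: (x |: A) = [set j] by rewrite cards1.
apply/setP => y; rewrite !inE; have [->|neq_yj] := eqVneq y j.
  by rewrite eq_sym (negbTE neq_xj) (negbTE jNA) jS.
rewrite andbC; have [yS|] //= := boolP (y \in S).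
by rewrite (subsetP sSA) ?orbT // !inE neq_yj.
Qed.

End UnionOfCodes.

Section Supports.

Variable F : fieldType.
Local Open Scope ring_scope.

Definition supp n (v : 'rV[F]_n) : {set 'I_n} := [set j | v ord0 j != 0].

Lemma supp_eq0 n (v : 'rV[F]_n) : (supp v == set0) = (v == 0).
Proof.
apply/eqP/eqP => [/setP suppv0 | ->]; last by apply/setP => j; rewrite !inE mxE eqxx.
by apply/rowP => j; move: (suppv0 j); rewrite !inE mxE => /negbFE/eqP.
Qed.

Lemma wt_subset_setC n (v : 'rV[F]_n) T :
  supp v \subset ~: T -> (wt v + #|T| <= n)%N.
Proof.
move/subset_leq_card; have := cardsC T; rewrite card_ord.
by change (wt v) with #|supp v|; lia.
Qed.

Lemma supp_eq_setC n (v : 'rV[F]_n) T :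
  supp v \subset ~: T -> (n <= wt v + #|T|)%N -> supp v = ~: T.
Proof.
move=> sub_vT le_n; apply/eqP; rewrite eqEcard sub_vT /=.
by rewrite -(leq_add2l #|T|) cardsC card_ord addnC.
Qed.

Lemma exists_vanishing p n (V : 'M[F]_(p, n)) (T : {set 'I_n}) :
  (#|T| < \rank V)%N -> exists v : 'rV_n, [/\ (v <= V)%MS, v != 0 & supp v \subset ~: T].
Proof.
(* [v *m P] lists the entries of [v] at the coordinates in [T]. *)
move=> ltTV; pose P : 'M[F]_(n, #|T|) := colsub enum_val 1%:M.
pose W := (V :&: kermx P)%MS.
have W_neq0 : W != 0.
  rewrite -mxrank_eq0 -lt0n; have := mxrank_sum_cap V (kermx P).
  rewrite mxrank_ker; have := rank_leq_col (V + kermx P)%MS.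
  have := rank_leq_col P; rewrite -/W; lia.
exists (nz_row W); split; first exact: submx_trans (nz_row_sub W) (capmxSl _ _).
  by rewrite nz_row_eq0.
apply/subsetP => j; rewrite !inE; apply: contra => jT.
have /sub_kermxP : (nz_row W <= kermx P)%MS.
  exact: submx_trans (nz_row_sub W) (capmxSr _ _).
rewrite /P mulmx_colsub mulmx1 => /matrixP/(_ ord0 (enum_rank_in jT j)).
by rewrite !mxE enum_rankK_in // => ->.
Qed.

Lemma meet_supp_orth n (u v : 'rV[F]_n) : u *m v^T = 0 -> #|supp u :&: supp v| != 1%N.
Proof.
move/rowP/(_ ord0); rewrite !mxE => uv0; apply/cards1P => -[x meet_x].
have /setIP[] : x \in supp u :&: supp v by rewrite meet_x set11.
rewrite !inE => ux_neq0 vx_neq0.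
move: uv0; rewrite (bigD1 x) //= big1 ?addr0 => [|j neq_jx]; rewrite mxE.
  by apply/eqP; rewrite mulf_neq0.
have : j \notin supp u :&: supp v by rewrite meet_x inE.
by rewrite !inE negb_and !negbK => /orP[]/eqP->; rewrite ?mul0r ?mulr0.
Qed.

Lemma not_covered_supp r n (H : 'M[F]_(r, n)) (c : 'rV_n) :
  c *m H^T = 0 -> ~~ covered H (supp c).
Proof.
move=> cH0; apply/existsP => -[i /eqP cover_i].
have cHi0 : c *m (row i H)^T = 0.
  by rewrite tr_row colEsub mulmx_colsub cH0; apply/matrixP => j l; rewrite !mxE.
have meetE : supp c :&: supp (row i H) = [set j in supp c | H i j != 0].
  by apply/setP => j; rewrite !inE mxE.
by move: (meet_supp_orth cHi0); rewrite meetE cover_i.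
Qed.

Lemma covered_row r n (H : 'M[F]_(r, n)) i (S T : {set 'I_n}) :
  supp (row i H) = ~: T -> #|S :\: T| = 1%N -> covered H S.
Proof.
move=> suppH cardST; apply/existsP; exists i.
have -> : [set j in S | H i j != 0] = S :&: supp (row i H).
  by apply/setP => j; rewrite !inE mxE.
by rewrite suppH -setDE cardST.
Qed.

Lemma stop_ok_wt r n (H : 'M[F]_(r, n)) s (c : 'rV_n) :
  stop_ok H s -> c *m H^T = 0 -> c != 0 -> (s <= wt c)%N.
Proof.
move=> okH cH0 c_neq0; rewrite leqNgt; apply/negP => ltcs.
by have := not_covered_supp cH0; rewrite okH ?supp_eq0 // -ltnS (ltn_predK ltcs).
Qed.

Lemma exists_low_weight p n (V : 'M[F]_(p, n)) :
  (0 < \rank V)%N ->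
  exists v : 'rV_n, [/\ (v <= V)%MS, v != 0 & (wt v + (\rank V).-1 <= n)%N].
Proof.
move=> rankV_gt0; have [T [_ _ cardT]] : exists T : {set 'I_n},
    [/\ set0 \subset T, T \subset setT & #|T| = (\rank V).-1].
  apply: ex_subset_card; rewrite ?subsetT // cards0 cardsT card_ord /=.
  by have := rank_leq_col V; lia.
have [|v [vV v_neq0 suppv]] := exists_vanishing (T := T) (V := V).
  by rewrite cardT; lia.
by exists v; split => //; rewrite -cardT wt_subset_setC.
Qed.

Lemma stop_ok_rank r n (H : 'M[F]_(r, n)) s :
  stop_ok H s -> (\rank H < n)%N -> (s <= (\rank H).+1)%N.
Proof.
move=> okH ltHn.
have rank_ker : \rank (kermx H^T) = (n - \rank H)%N by rewrite mxrank_ker mxrank_tr.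
have [|c [cK c_neq0 wtc]] := exists_low_weight (V := kermx H^T).
  by rewrite rank_ker; lia.
have := stop_ok_wt okH (sub_kermxP cK) c_neq0; rewrite rank_ker in wtc; lia.
Qed.

Lemma mulmx_tr_dual k n p r (G : 'M[F]_(k, n)) (A : 'M_(p, n)) (B : 'M_(r, n)) :
  (A <= G)%MS -> (B <= dual_code G)%MS -> A *m B^T = 0.
Proof.
case/submxP => D -> /sub_kermxP BG0.
by rewrite -mulmxA -[G]trmxK -trmx_mul BG0 trmx0 mulmx0.
Qed.

End Supports.

Section MDSCode.

Variables (F : finFieldType) (k n : nat) (G : 'M[F]_(k, n)).
Local Open Scope ring_scope.

Hypothesis rankG : \rank G = k.
Hypothesis wt_codeword : forall c, codeword G c -> c != 0 -> (n - k < wt c)%N.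

Lemma rank_dual_code : \rank (dual_code G) = (n - k)%N.
Proof. by rewrite /dual_code mxrank_ker mxrank_tr rankG. Qed.

(* A codeword vanishing on a (k-1)-set T with supp u :\ j0 <= T and j0 \notin T has
   support exactly ~: T, so it would meet supp u in the single point j0. *)
Lemma wt_dual_code u : (u <= dual_code G)%MS -> u != 0 -> (k < wt u)%N.
Proof.
move=> uD u_neq0; rewrite ltnNge; apply/negP => wtu.
have /set0Pn[j0 j0u] : supp u != set0 by rewrite supp_eq0.
have wtuE : #|supp u :\ j0|.+1 = wt u by rewrite [wt u](cardsD1 j0) j0u.
have [T [suT sTj0 cardT]] : exists T : {set 'I_n},
    [/\ supp u :\ j0 \subset T, T \subset [set~ j0] & #|T| = k.-1].
  apply: ex_subset_card; first by apply/subsetP => j; rewrite !inE => /andP[].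
  by rewrite cardsC1 card_ord; have := rank_leq_col G; rewrite rankG; lia.
have [|c [cG c_neq0 suppc]] := exists_vanishing (V := G) (T := T).
  by rewrite cardT rankG; lia.
have suppcE : supp c = ~: T.
  by apply: supp_eq_setC => //; have := wt_codeword cG c_neq0; lia.
have := meet_supp_orth (mulmx_tr_dual cG uD).
suff -> : supp c :&: supp u = [set j0] by rewrite cards1.
apply/setP => j; rewrite in_setI suppcE in_setC in_set1.
have [->|neq_jj0] := eqVneq j j0.
  by rewrite j0u andbT; apply/negP => /(subsetP sTj0); rewrite !inE eqxx.
rewrite andbC; have [ju|] //= := boolP (j \in supp u).
by rewrite (subsetP suT) // in_setD1 neq_jj0 ju.
Qed.

Lemma exists_dual_supp (T : {set 'I_n}) :
  #|T|.+1 = (n - k)%N -> exists2 v : 'rV_n, (v <= dual_code G)%MS & supp v = ~: T.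
Proof.
move=> cardT; have [|v [vD v_neq0 suppv]] := exists_vanishing (V := dual_code G) (T := T).
  by rewrite rank_dual_code -cardT.
by exists v => //; apply: supp_eq_setC => //; have := wt_dual_code vD v_neq0; lia.
Qed.

Definition dual_word (T : {set 'I_n}) : 'rV[F]_n :=
  odflt 0 [pick v | (v <= dual_code G)%MS && (supp v == ~: T)].

Lemma dual_wordP (T : {set 'I_n}) :
  #|T|.+1 = (n - k)%N -> (dual_word T <= dual_code G)%MS /\ supp (dual_word T) = ~: T.
Proof.
rewrite /dual_word; case: pickP => [v /andP[vD /eqP suppv] | no_v] // cardT.
by have [v vD suppv] := exists_dual_supp cardT; move: (no_v v); rewrite vD suppv eqxx.
Qed.

Variable Tf : {set {set 'I_n}}.
Hypothesis card_Tf : forall T, T \in Tf -> #|T|.+1 = (n - k)%N.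

Definition dual_rows : 'M[F]_(#|Tf|, n) := \matrix_(i, j) dual_word (enum_val i) ord0 j.

Lemma row_dual_rows i : row i dual_rows = dual_word (enum_val i).
Proof. by apply/rowP => j; rewrite !mxE. Qed.

Lemma dual_rows_sub : (dual_rows <= dual_code G)%MS.
Proof.
by apply/row_subP => i; rewrite row_dual_rows; case: (dual_wordP (card_Tf (enum_valP i))).
Qed.

Lemma covered_dual_rows S T : T \in Tf -> #|S :\: T| = 1%N -> covered dual_rows S.
Proof.
move=> TTf; apply: (covered_row (i := enum_rank_in TTf T)).
by rewrite row_dual_rows enum_rankK_in //; case: (dual_wordP (card_Tf TTf)).
Qed.

Lemma stop_achievable_dual_rows :
  (exists c, codeword G c /\ c != 0 /\ wt c = (n - k + 1)%N) ->
  (forall S, S != set0 -> (#|S| <= n - k)%N -> exists2 T, T \in Tf & #|S :\: T| = 1%N) ->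
  stop_achievable G (n - k + 1) #|Tf|.
Proof.
move=> [c [cG [c_neq0 wtc]]] cover_Tf.
have cH0 : c *m dual_rows^T = 0 := mulmx_tr_dual cG dual_rows_sub.
have okH : stop_ok dual_rows (n - k + 1).
  move=> S S_neq0; rewrite addn1 => /(cover_Tf S S_neq0)[T TTf cardST].
  exact: covered_dual_rows TTf cardST.
exists dual_rows; split; last first.
  by split=> // ok_succ; have := stop_ok_wt ok_succ cH0 c_neq0; rewrite wtc addn1 ltnn.
rewrite /parity_check -(mxrank_leqif_eq dual_rows_sub).2 eqn_leq.
rewrite (mxrank_leqif_eq dual_rows_sub).1 rank_dual_code /= leqNgt; apply/negP => ltH.
have rank_bound := stop_ok_rank okH (leq_trans ltH (leq_subr k n)).
by rewrite addn1 ltnS leqNgt ltH in rank_bound.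
Qed.

End MDSCode.

Theorem theorem18 (F : finFieldType) (n k d : nat) (G : 'M[F]_(k, n)) :
  \rank G = k ->
  min_distance G d ->
  d = (n - k + 1)%N ->
  (3 <= d)%N ->
  exists rho : nat,
    stopping_redundancy_is G d rho /\
    (rho <= 'C(n, d - 2) - U n (d - 2) (minn k (n - k - 1)))%N.
Proof.
move=> rankG [min_word wt_min] dE d_ge3; subst d.
set w := (n - k + 1 - 2)%N; set m := minn k (n - k - 1).
have [f code_f Uf] := U_attained n w m.
pose Tf := [set T : {set 'I_n} | #|T| == w] :\: \bigcup_(i < m) f i.
have achTf : stop_achievable G (n - k + 1) #|Tf|.
  apply: stop_achievable_dual_rows => //.
  - by move=> c cG c_neq0; rewrite -addn1 wt_min.
  - by move=> T; rewrite !inE => /andP[_ /eqP ->]; rewrite /w; lia.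
  move=> S S_neq0 cardS.
  have [|||T [cardT TNR cardST]] :=
    exists_cover_notin_codes code_f (S := S) _ _ S_neq0.
  + by rewrite /m /w; lia.
  + by rewrite /m /w; lia.
  + by rewrite /w; lia.
  by exists T; rewrite // !inE TNR cardT eqxx.
have [rho [rho_ach rho_min]] := classic_ex_minn (ex_intro _ _ achTf).
exists rho; split => //.
by rewrite Uf -card_draws_notin_codes //; apply: rho_min.
Qed.
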